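(* Let $\theta_0:\mathbb{R}^d\to\mathbb{R}^{d_\theta}$ be measurable and for each $N\ge1$ let $\hat\theta_N$ be a (possibly random) $\mathbb{R}^{d_\theta}$-valued estimator built from data independent of $X^s,X^t$. Suppose (i) $\|\hat\theta_N(X^s)\|_\infty\le\xi_N$ a.s. for every $N\ge1$; (ii) $\mathbb{E}\|\theta_0(X^s)\|_\infty^8<\infty$; (iii) there are constants $c>0$, $m\ge0$ with $r_0(x)\le c\exp(m\|x\|_\infty)$ for all $x$; (iv) $\mathbb{E}[r_0(X^s)^2]<\infty$; (v) $\mathbb{E}\exp(\varsigma\|X^s\|_\infty^2)<\infty$ for some constant $\varsigma>0$. Then for $N\ge2$, $$\mathbb{E}\|\hat\theta_N(X^t)-\theta_0(X^t)\|_2^2=\mathbb{E}\big[\|\hat\theta_N(X^s)-\theta_0(X^s)\|_2^2r_0(X^s)\big]\le c_1\exp\{c_2(\log N)^{1/2}\}\,\mathbb{E}\|\hat\theta_N(X^s)-\theta_0(X^s)\|_2^2+\frac{c_3d_\theta(\xi_N^2+1)}{N},$$ with constants $c_1,c_2,c_3$ not depending on $N$.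
   Context: $X^s,X^t$ are random vectors in $\mathbb{R}^d$ with Lebesgue densities $p,q$, $\{q>0\}\subset\{p>0\}$, and density ratio $r_0=q/p$ (with $0/0=0$). Expectations are over both the test point and the randomness of $\hat\theta_N$. *)

From HB Require Import structures.
From mathcomp Require Import all_boot all_order all_algebra.
From mathcomp Require Import all_classical all_reals all_analysis.
Set Implicit Arguments. Unset Strict Implicit. Unset Printing Implicit Defensive.
Import Order.TTheory GRing.Theory Num.Theory.
Local Open Scope ring_scope.
Local Open Scope classical_set_scope.

(* Points of R^n are n.-tuples of reals (measurable structure generated by the
   coordinate maps, i.e. the Borel sigma-algebra of R^n). *)

Definition sup_norm {R : realType} {n : nat} (x : n.-tuple R) : R :=
  \big[Num.max/0]_(i < n) `|tnth x i|.

Definition dist2_sq {R : realType} {n : nat} (u v : n.-tuple R) : R :=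
  \sum_(i < n) (tnth u i - tnth v i) ^+ 2.

Definition is_lebesgue_tuple {R : realType} {n : nat}
  (mu : {measure set (n.-tuple R) -> \bar R}) : Prop :=
  forall a b : n.-tuple R, (forall i, tnth a i <= tnth b i) ->
    mu [set x | forall i, tnth a i <= tnth x i <= tnth b i] =
    (\prod_(i < n) (tnth b i - tnth a i))%:E.

(* density ratio r0 = q / p, with the convention 0/0 = 0 (x / 0 = 0 in mathcomp) *)
Definition dens_ratio {R : realType} {n : nat} (p q : n.-tuple R -> R)
  (x : n.-tuple R) : R := q x / p x.

Definition Ex {R : realType} {n : nat} (mu : {measure set (n.-tuple R) -> \bar R})
  (p : n.-tuple R -> R) (f : n.-tuple R -> \bar R) : \bar R :=
  (\int[mu]_x ((p x)%:E * f x))%E.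

(* E f(omega, X): omega is the randomness of the estimator (law P), X has
   Lebesgue density p and is independent of omega, so the joint law is the
   product P (x) (p . mu); the expectation is the iterated integral. *)
Definition Exw {R : realType} {dO : measure_display} {Omega : measurableType dO}
  (P : probability Omega R) {n : nat} (mu : {measure set (n.-tuple R) -> \bar R})
  (p : n.-tuple R -> R) (f : Omega -> n.-tuple R -> \bar R) : \bar R :=
  (\int[P]_w Ex mu p (f w))%E.

(* The identity is the change of measure from q to p.  For the bound, split the test point
   at the radius 2 (log N / vs)^(1/2): inside it r0 <= c exp (2 m (log N / vs)^(1/2)),
   which yields the first term.  Outside it exp (vs ||x||^2) >= N^4, and since
   ||thetahat - theta0||^2 <= 2 dth (xi_N^2 + ||theta0||^2), elementary AM-GM bounds
   N r0 ||thetahat - theta0||^2 by 2 dth (xi_N^2 + 1) (r0^2 + ||theta0||^8 + exp (vs ||x||^2)),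
   an envelope of finite expectation by (ii), (iv) and (v).  The pointwise bound holds off
   the event of (i), which is null, so it integrates. *)

From HB Require Import structures.
From mathcomp Require Import all_boot all_order all_algebra.
From mathcomp Require Import all_classical all_reals all_analysis.
From mathcomp Require Import measurable_realfun ring lra.
Set Implicit Arguments. Unset Strict Implicit. Unset Printing Implicit Defensive.
Import Order.TTheory GRing.Theory Num.Theory.
Local Open Scope ring_scope.
Local Open Scope classical_set_scope.

Section RealBounds.
Variable R : realType.
Implicit Types n r t E x vs k xi c m D s : R.

Lemma mul_le_sqr_add_pow4 n r t E : 1 <= n -> n ^+ 4 <= E -> 0 <= r -> 0 <= t ->
  n * r <= r ^+ 2 + t ^+ 4 + E /\ n * (t * r) <= r ^+ 2 + t ^+ 4 + E.
Proof.
move=> n1 hE r0 t0.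
have n2 : n ^+ 2 <= n ^+ 4.
  have : 1 <= n ^+ 2 by nra.
  nra.
have amgm x y : x * y <= x ^+ 2 + y ^+ 2 by have := sqr_ge0 (x - y); nra.
have t4 : 0 <= t ^+ 4 by rewrite exprn_ge0.
split; first by have := amgm n r; nra.
have := amgm (n * t) r; have := amgm (n ^+ 2) (t ^+ 2).
rewrite -!exprM /=; nra.
Qed.

Lemma pow4_le_expR_sqr (N : nat) vs x : (0 < N)%N -> 0 < vs ->
  2 * Num.sqrt (ln N%:R) / Num.sqrt vs <= x -> N%:R ^+ 4 <= expR (vs * x ^+ 2).
Proof.
move=> N0 vs0 hx.
have L0 : 0 <= ln (N%:R : R) by rewrite ln_ge0 // ler1n.
have threshold : vs * (2 * Num.sqrt (ln N%:R) / Num.sqrt vs) ^+ 2 = 4%:R * ln N%:R.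
  rewrite expr_div_n exprMn (sqr_sqrtr L0) (sqr_sqrtr (ltW vs0)).
  by field; rewrite gt_eqF.
have -> : N%:R ^+ 4 = expR (4%:R * ln (N%:R : R)).
  by rewrite expRM_natl lnK // posrE ltr0n.
rewrite ler_expR -threshold.
have t0 : 0 <= 2 * Num.sqrt (ln N%:R) / Num.sqrt vs by rewrite divr_ge0 ?mulr_ge0 ?sqrtr_ge0.
apply: ler_wpM2l; first exact: ltW.
by rewrite ler_sqr ?nnegrE// (le_trans t0 hx).
Qed.

Lemma mul_dens_ratio_le (N : nat) k xi c m vs D r s x :
  (0 < N)%N -> 0 < vs -> 0 <= m -> 0 <= k -> 0 <= D -> 0 <= r ->
  D <= k * (xi ^+ 2 + s ^+ 2) -> r <= c * expR (m * x) ->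
  D * r <= c * expR (2 * m / Num.sqrt vs * Num.sqrt (ln N%:R)) * D
     + k * (xi ^+ 2 + 1) / N%:R * (r ^+ 2 + s ^+ 8 + expR (vs * x ^+ 2)).
Proof.
move=> N0 vs0 m0 k0 D0 r0 hD hr.
set K := c * _; set G := _ + expR _.
have c0 : 0 <= c by have := expR_gt0 (m * x); nra.
have G0 : 0 <= G by rewrite !addr_ge0 ?sqr_ge0 ?expR_ge0 ?exprn_even_ge0.
have A0 : 0 <= k * (xi ^+ 2 + 1) / N%:R * G.
  by rewrite !mulr_ge0 ?invr_ge0 ?addr_ge0 ?sqr_ge0 ?ler0n ?exprn_even_ge0.
have KD0 : 0 <= K * D by rewrite !mulr_ge0 ?expR_ge0.
have [core|tail] := lerP x (2 * Num.sqrt (ln N%:R) / Num.sqrt vs).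
  suff : r <= K by move=> rK; rewrite mulrC; have := ler_wpM2r D0 rK; lra.
  apply: (le_trans hr); apply: ler_wpM2l => //; rewrite ler_expR.
  have -> : 2 * m / Num.sqrt vs * Num.sqrt (ln N%:R) =
    m * (2 * Num.sqrt (ln N%:R) / Num.sqrt vs) by ring.
  exact: ler_wpM2l.
suff : D * r <= k * (xi ^+ 2 + 1) / N%:R * G by lra.
have n1 : 1 <= N%:R :> R by rewrite ler1n.
have [nr nsr] := mul_le_sqr_add_pow4 n1 (pow4_le_expR_sqr N0 vs0 (ltW tail)) r0 (sqr_ge0 s).
rewrite -exprM -/G in nr nsr.
rewrite mulrAC ler_pdivlMr ?ltr0n //.
apply: (@le_trans _ _ (k * (xi ^+ 2 * (N%:R * r) + N%:R * (s ^+ 2 * r)))).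
  have -> : k * (xi ^+ 2 * (N%:R * r) + N%:R * (s ^+ 2 * r)) =
    k * (xi ^+ 2 + s ^+ 2) * (r * N%:R) by ring.
  by rewrite -(mulrA D); apply: ler_wpM2r; rewrite ?mulr_ge0 ?ler0n.
rewrite -(mulrA k); apply: ler_wpM2l => //.
by rewrite mulrDl mul1r lerD // ler_wpM2l ?sqr_ge0.
Qed.

End RealBounds.

Section TupleNorms.
Variables (R : realType) (n : nat).
Implicit Types (u v x : n.-tuple R) (b : R).

Lemma sup_norm_ge0 x : 0 <= sup_norm x.
Proof. exact: bigmax_ge_id. Qed.

Lemma le_sup_norm x i : `|tnth x i| <= sup_norm x.
Proof. exact: (le_bigmax _ (fun i => `|tnth x i|)). Qed.

Lemma sqr_tnth_le x i : tnth x i ^+ 2 <= sup_norm x ^+ 2.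
Proof. by rewrite -real_normK ?num_real // ler_sqr ?nnegrE ?sup_norm_ge0 ?le_sup_norm. Qed.

Lemma dist2_sq_ge0 u v : 0 <= dist2_sq u v.
Proof. by apply: sumr_ge0 => i _; exact: sqr_ge0. Qed.

Lemma dist2_sq_le u v b : sup_norm u <= b ->
  dist2_sq u v <= 2 * n%:R * (b ^+ 2 + sup_norm v ^+ 2).
Proof.
move=> ub.
have b2 : sup_norm u ^+ 2 <= b ^+ 2.
  by rewrite ler_sqr ?nnegrE ?sup_norm_ge0 // (le_trans (sup_norm_ge0 u)).
apply: (@le_trans _ _ (\sum_(i < n) 2 * (b ^+ 2 + sup_norm v ^+ 2))).
  apply: ler_sum => i _.
  have := sqr_tnth_le u i; have := sqr_tnth_le v i.
  have := sqr_ge0 (tnth u i + tnth v i); nra.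
by rewrite sumr_const card_ord -mulr_natl; lra.
Qed.

End TupleNorms.

Lemma measurable_inv (R : realType) : measurable_fun setT (@GRing.inv R).
Proof.
have -> : [set: R] = [set x | x != 0] `|` [set 0].
  by apply/seteqP; split => x //= _; case: (eqVneq x 0) => h; [right|left].
apply/measurable_funU.
- by apply: open_measurable; exact: open_neq.
- exact: measurable_set1.
split; last exact: measurable_fun_set1.
apply: open_continuous_measurable_fun; first exact: open_neq.
by move=> x; rewrite inE /= => hx; exact: inv_continuous.
Qed.

Section Measurability.
Variables (R : realType) (dT : measure_display) (T : measurableType dT).

Lemma measurable_bigmax (I : Type) (s : seq I) (F : I -> T -> R) :
  (forall i, measurable_fun setT (F i)) ->
  measurable_fun setT (fun x => \big[Num.max/0]_(i <- s) F i x).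
Proof.
move=> mF; elim: s => [|i s IH].
  by under eq_fun do rewrite big_nil; exact: measurable_cst.
under eq_fun do rewrite big_cons.
exact: measurable_maxr.
Qed.

Lemma measurable_sup_norm n (f : T -> n.-tuple R) : measurable_fun setT f ->
  measurable_fun setT (fun x => sup_norm (f x)).
Proof.
move=> mf; apply: (@measurable_bigmax _ _ (fun i x => `|tnth (f x) i|)) => i.
exact/measurableT_comp/(measurableT_comp (measurable_tnth i) mf).
Qed.

Lemma measurable_dist2_sq n (f g : T -> n.-tuple R) :
  measurable_fun setT f -> measurable_fun setT g ->
  measurable_fun setT (fun x => dist2_sq (f x) (g x)).
Proof.
move=> mf mg; apply: measurable_sum => i.
apply/measurable_funX/measurable_funB.
  exact: (measurableT_comp (measurable_tnth i) mf).
exact: (measurableT_comp (measurable_tnth i) mg).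
Qed.

End Measurability.

Lemma measurable_dens_ratio (R : realType) n (p q : n.-tuple R -> R) :
  measurable_fun setT p -> measurable_fun setT q ->
  measurable_fun setT (dens_ratio p q).
Proof.
move=> mp mq; apply: measurable_funM => //.
exact: measurableT_comp (@measurable_inv R) mp.
Qed.

Lemma lebesgue_tuple_sigma_finite (R : realType) n
    (mu : {measure set (n.-tuple R) -> \bar R}) :
  is_lebesgue_tuple mu -> sigma_finite setT mu.
Proof.
move=> hmu.
pose a (k : nat) : n.-tuple R := [tuple - k%:R | i < n].
pose b (k : nat) : n.-tuple R := [tuple k%:R | i < n].
exists (fun k => [set x | forall i, tnth (a k) i <= tnth x i <= tnth (b k) i]).
  apply/seteqP; split => x // _; exists (Num.truncn (sup_norm x)).+1 => //= i.
  rewrite !tnth_mktuple -ler_norml; apply: (le_trans (le_sup_norm x i)).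
  exact/ltW/archimedean.Num.Theory.truncnS_gt.
move=> k; split.
  have -> : [set x | forall i, tnth (a k) i <= tnth x i <= tnth (b k) i] =
      \bigcap_(i in [set: 'I_n]) ((@tnth n R)^~ i @^-1` `[tnth (a k) i, tnth (b k) i]).
    apply/seteqP; split => x /=.
      by move=> h i _ /=; rewrite in_itv /= h.
    by move=> h i; have := h i I; rewrite /= in_itv.
  apply: fin_bigcap_measurable; first exact: finite_finset.
  by move=> i _; rewrite -[X in measurable X]setTI; exact: measurable_tnth.
rewrite hmu; first exact: ltry.
by move=> i; rewrite !tnth_mktuple; have := ler0n R k; lra.
Qed.

(* Fubini--Tonelli needs [mu] as a [sigma_finite_measure] structure. *)
Definition sigma_finite_measure_of (R : realType) (d : measure_display) (T : measurableType d)
  (mu : {measure set T -> \bar R}) (mu_sf : sigma_finite setT mu) : set T -> \bar R := mu.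
HB.instance Definition _ R d T mu mu_sf :=
  Measure.copy (@sigma_finite_measure_of R d T mu mu_sf) mu.
HB.instance Definition _ R d T mu mu_sf :=
  @Measure_isSigmaFinite.Build _ _ _ (@sigma_finite_measure_of R d T mu mu_sf) mu_sf.

Section IteratedIntegral.
Variables (R : realType) (d1 d2 : measure_display).
Variables (T1 : measurableType d1) (T2 : measurableType d2).
Variables (P : probability T1 R) (mu : {sigma_finite_measure set T2 -> \bar R}).
Local Open Scope ereal_scope.

Lemma iterated_integral_le_off_null (F D B : T1 * T2 -> R) (g : T2 -> R) (K C : R) :
  measurable_fun setT F -> measurable_fun setT D -> measurable_fun setT B ->
  measurable_fun setT g ->
  (forall z, 0 <= F z)%R -> (forall z, 0 <= D z)%R -> (forall z, 0 <= B z)%R ->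
  (forall y, 0 <= g y)%R -> (0 <= K)%R -> (0 <= C)%R ->
  (forall z, B z = 0 -> F z <= K * D z + C * g z.2)%R ->
  \int[P]_w \int[mu]_y (B (w, y))%:E = 0 ->
  \int[P]_w \int[mu]_y (F (w, y))%:E <=
    K%:E * \int[P]_w \int[mu]_y (D (w, y))%:E + C%:E * \int[mu]_y (g y)%:E.
Proof.
move=> mF mD mB mg F0 D0 B0 g0 K0 C0 hFDB hB.
have mE (f : T1 * T2 -> R) : measurable_fun setT f -> measurable_fun setT (EFin \o f).
  by move=> mf; exact/measurable_EFinP.
have tonelli (f : T1 * T2 -> R) : measurable_fun setT f -> (forall z, 0 <= f z)%R ->
    \int[P \x mu]_z (f z)%:E = \int[P]_w \int[mu]_y (f (w, y))%:E.
  by move=> mf f0; rewrite fubini_tonelli1//; exact: mE.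
have mg2 : measurable_fun setT (fun z : T1 * T2 => g z.2) by exact: measurableT_comp.
have -> : \int[mu]_y (g y)%:E = \int[P \x mu]_z (g z.2)%:E.
  rewrite (tonelli (fun z => g z.2))//= -[LHS]mule1 -(probability_setT P).
  by rewrite -integral_cst.
rewrite -tonelli // -(tonelli D) // -!ge0_integralZl_EFin //; try exact: mE;
  try by move=> z _; rewrite lee_fin.
rewrite -ge0_integralD //; last 4 first.
- by move=> z _; rewrite -EFinM lee_fin mulr_ge0.
- by apply/measurable_EFinP; apply: measurable_funM.
- by move=> z _; rewrite -EFinM lee_fin mulr_ge0.
- by apply/measurable_EFinP; apply: measurable_funM.
rewrite -tonelli // in hB.
have B_ae0 : ae_eq (P \x mu) setT (EFin \o B) (cst 0).
  apply/ae_eq_integral_abs => //; first exact: mE.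
  by rewrite -hB; apply: eq_integral => z _ /=; rewrite ger0_norm.
apply: ae_ge0_le_integral => //.
- by move=> z _; rewrite lee_fin.
- exact: mE.
- by move=> z _; rewrite -!EFinM adde_ge0// lee_fin mulr_ge0.
- by apply: emeasurable_funD; apply/measurable_EFinP; apply: measurable_funM.
- apply: filterS B_ae0 => z /(_ I) /= [] Bz0 _.
  by rewrite -!EFinM -EFinD lee_fin; apply: hFDB.
Qed.

End IteratedIntegral.

Section Expectations.
Variables (R : realType) (n : nat) (mu : {measure set (n.-tuple R) -> \bar R}).
Variables (p : n.-tuple R -> R).
Hypotheses (mp : measurable_fun setT p) (p0 : forall x, 0 <= p x).
Variables (dO : measure_display) (Omega : measurableType dO) (P : probability Omega R).
Local Open Scope ereal_scope.

Lemma Ex_EFin (f : n.-tuple R -> R) :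
  Ex mu p (fun x => (f x)%:E) = \int[mu]_x (p x * f x)%:E.
Proof. by apply: eq_integral => x _; rewrite EFinM. Qed.

Lemma Exw_EFin (f : Omega -> n.-tuple R -> R) :
  Exw P mu p (fun w x => (f w x)%:E) = \int[P]_w \int[mu]_x (p x * f w x)%:E.
Proof. by apply: eq_integral => w _; rewrite Ex_EFin. Qed.

Lemma ExD (f g : n.-tuple R -> R) :
  measurable_fun setT f -> measurable_fun setT g ->
  (forall x, 0 <= f x)%R -> (forall x, 0 <= g x)%R ->
  Ex mu p (fun x => (f x + g x)%:E) =
    Ex mu p (fun x => (f x)%:E) + Ex mu p (fun x => (g x)%:E).
Proof.
move=> mf mg f0 g0; rewrite !Ex_EFin -ge0_integralD //.
- by apply: eq_integral => x _; rewrite mulrDr EFinD.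
- by move=> x _; rewrite lee_fin mulr_ge0.
- exact/measurable_EFinP/measurable_funM.
- by move=> x _; rewrite lee_fin mulr_ge0.
- exact/measurable_EFinP/measurable_funM.
Qed.

Lemma Exw_change_density (q : n.-tuple R -> R) (f : Omega -> n.-tuple R -> R) :
  (forall x, 0 <= q x)%R -> (forall x, 0 < q x -> 0 < p x)%R ->
  Exw P mu q (fun w x => (f w x)%:E) =
    Exw P mu p (fun w x => (f w x * dens_ratio p q x)%:E).
Proof.
move=> q0 qp; rewrite !Exw_EFin; apply: eq_integral => w _.
apply: eq_integral => x _; congr EFin; rewrite /dens_ratio.
have [px0|px_neq0] := eqVneq (p x) 0%R; last by field.
suff -> : q x = 0%R by rewrite px0 !(mul0r, mulr0).
by apply/eqP; rewrite eq_le q0 andbT leNgt; apply/negP => /qp; rewrite px0 ltxx.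
Qed.

Lemma Exw_weighted_le (mu_sf : sigma_finite setT mu) (D : Omega -> n.-tuple R -> R)
    (r g : n.-tuple R -> R) (b : Omega -> n.-tuple R -> bool) (K C : R) :
  measurable_fun setT (fun z : Omega * n.-tuple R => D z.1 z.2) ->
  measurable_fun setT r -> measurable_fun setT g ->
  measurable_fun setT (fun z : Omega * n.-tuple R => b z.1 z.2) ->
  (forall w x, 0 <= D w x)%R -> (forall x, 0 <= r x)%R -> (forall x, 0 <= g x)%R ->
  (0 <= K)%R -> (0 <= C)%R ->
  (forall w x, ~~ b w x -> D w x * r x <= K * D w x + C * g x)%R ->
  Exw P mu p (fun w x => (if b w x then 1 else 0)%:E) = 0 ->
  Exw P mu p (fun w x => (D w x * r x)%:E) <=
    K%:E * Exw P mu p (fun w x => (D w x)%:E) + C%:E * Ex mu p (fun x => (g x)%:E).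
Proof.
move=> mD mr mg mb D0 r0 g0 K0 C0 hDr hb; rewrite !Exw_EFin Ex_EFin.
have mp2 : measurable_fun setT (fun z : Omega * n.-tuple R => p z.2).
  exact: measurableT_comp.
apply: (@iterated_integral_le_off_null _ _ _ _ _ P (sigma_finite_measure_of mu_sf)
  (fun z => p z.2 * (D z.1 z.2 * r z.2))%R (fun z => p z.2 * D z.1 z.2)%R
  (fun z => p z.2 * (if b z.1 z.2 then 1 else 0))%R (fun x => p x * g x)%R K C) => //.
- by apply: measurable_funM => //; apply: measurable_funM => //; exact: measurableT_comp.
- exact: measurable_funM.
- apply: measurable_funM => //; apply: measurable_fun_ifT => //; exact: measurable_cst.
- exact: measurable_funM.
- by move=> z; rewrite !mulr_ge0.
- by move=> z; rewrite mulr_ge0.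
- by move=> z; rewrite mulr_ge0 //; case: ifP.
- by move=> x; rewrite mulr_ge0.
- move=> [w x] /= /eqP; rewrite mulf_eq0 => /orP[/eqP -> | ]; first by rewrite !mul0r !mulr0 addr0.
  case: ifPn => [_|/hDr bound _]; first by rewrite oner_eq0.
  have -> : (K * (p x * D w x) + C * (p x * g x) = p x * (K * D w x + C * g x))%R.
    by ring.
  exact: ler_wpM2l.
Qed.

Lemma Ex_lt_pinftyD (f g : n.-tuple R -> R) :
  measurable_fun setT f -> measurable_fun setT g ->
  (forall x, 0 <= f x)%R -> (forall x, 0 <= g x)%R ->
  Ex mu p (fun x => (f x)%:E) < +oo -> Ex mu p (fun x => (g x)%:E) < +oo ->
  Ex mu p (fun x => (f x + g x)%:E) < +oo.
Proof. by move=> mf mg f0 g0 fi gi; rewrite ExD // lte_add_pinfty. Qed.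

End Expectations.

Section TailEnvelope.
Variables (R : realType) (d dth : nat) (mu : {measure set (d.-tuple R) -> \bar R}).
Variables (p q : d.-tuple R -> R) (theta0 : d.-tuple R -> dth.-tuple R) (vs : R).

Definition tail_envelope x :=
  dens_ratio p q x ^+ 2 + sup_norm (theta0 x) ^+ 8 + expR (vs * sup_norm x ^+ 2).

Lemma tail_envelope_ge0 x : 0 <= tail_envelope x.
Proof. by rewrite !addr_ge0 ?sqr_ge0 ?expR_ge0 ?exprn_even_ge0. Qed.

Hypotheses (mp : measurable_fun setT p) (mq : measurable_fun setT q).
Hypothesis mtheta0 : measurable_fun setT theta0.

Let msup : measurable_fun setT (fun x : d.-tuple R => sup_norm x).
Proof. exact: (@measurable_sup_norm _ _ _ _ id). Qed.

Let mratio2 : measurable_fun setT (fun x => dens_ratio p q x ^+ 2).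
Proof. exact: measurable_funX (measurable_dens_ratio mp mq). Qed.

Let mtheta8 : measurable_fun setT (fun x => sup_norm (theta0 x) ^+ 8).
Proof. exact: measurable_funX (measurable_sup_norm mtheta0). Qed.

Let mgauss : measurable_fun setT (fun x : d.-tuple R => expR (vs * sup_norm x ^+ 2)).
Proof.
apply: measurableT_comp; first exact: measurable_expR.
by apply: measurable_funM; [exact: measurable_cst | exact: measurable_funX].
Qed.

Lemma measurable_tail_envelope : measurable_fun setT tail_envelope.
Proof. exact: measurable_funD (measurable_funD mratio2 mtheta8) mgauss. Qed.

Lemma Ex_tail_envelope_fin_num : (forall x, 0 <= p x) ->
  (Ex mu p (fun x => (dens_ratio p q x ^+ 2)%:E) < +oo)%E ->
  (Ex mu p (fun x => (sup_norm (theta0 x) ^+ 8)%:E) < +oo)%E ->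
  (Ex mu p (fun x => (expR (vs * sup_norm x ^+ 2))%:E) < +oo)%E ->
  (Ex mu p (fun x => (tail_envelope x)%:E) \is a fin_num)%E.
Proof.
move=> p0 ratio2 moment8 gauss.
have mr2 := mratio2; have mt8 := mtheta8; have mg := mgauss.
rewrite ge0_fin_numE; last first.
  by apply: integral_ge0 => x _; rewrite -EFinM lee_fin mulr_ge0 ?tail_envelope_ge0.
have ratio2_ge0 x : 0 <= dens_ratio p q x ^+ 2 by exact: sqr_ge0.
have theta8_ge0 x : 0 <= sup_norm (theta0 x) ^+ 8 by exact: exprn_even_ge0.
apply: Ex_lt_pinftyD => //; first exact: measurable_funD.
  by move=> x; rewrite addr_ge0.
exact: Ex_lt_pinftyD.
Qed.

End TailEnvelope.

Theorem proposition4p4 (R : realType) (d dth : nat)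
  (mu : {measure set (d.-tuple R) -> \bar R})
  (p q : d.-tuple R -> R)
  (dO : measure_display) (Omega : measurableType dO) (P : probability Omega R)
  (theta0 : d.-tuple R -> dth.-tuple R)
  (thetahat : nat -> Omega -> d.-tuple R -> dth.-tuple R)
  (xi : nat -> R) (c m : R) :
  is_lebesgue_tuple mu ->
  measurable_fun setT p -> measurable_fun setT q ->
  (forall x, 0 <= p x) -> (forall x, 0 <= q x) ->
  (\int[mu]_x (p x)%:E = 1)%E -> (\int[mu]_x (q x)%:E = 1)%E ->
  (forall x, 0 < q x -> 0 < p x) ->
  measurable_fun setT theta0 ->
  (forall N, measurable_fun setT (fun z : Omega * d.-tuple R => thetahat N z.1 z.2)) ->
  (forall N, (1 <= N)%N ->
     Exw P mu p (fun w x => (if xi N < sup_norm (thetahat N w x) then 1 else 0)%:E)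
     = 0%E) ->
  (Ex mu p (fun x => (sup_norm (theta0 x) ^+ 8)%:E) < +oo)%E ->
  0 < c -> 0 <= m ->
  (forall x, dens_ratio p q x <= c * expR (m * sup_norm x)) ->
  (Ex mu p (fun x => (dens_ratio p q x ^+ 2)%:E) < +oo)%E ->
  (exists2 vs : R, 0 < vs &
     (Ex mu p (fun x => (expR (vs * sup_norm x ^+ 2))%:E) < +oo)%E) ->
  exists c1 c2 c3 : R, forall N : nat, (2 <= N)%N ->
    Exw P mu q (fun w x => (dist2_sq (thetahat N w x) (theta0 x))%:E)
    = Exw P mu p (fun w x =>
        (dist2_sq (thetahat N w x) (theta0 x) * dens_ratio p q x)%:E)
    /\
    (Exw P mu p (fun w x =>
        (dist2_sq (thetahat N w x) (theta0 x) * dens_ratio p q x)%:E)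
     <= (c1 * expR (c2 * Num.sqrt (ln N%:R)))%:E
          * Exw P mu p (fun w x => (dist2_sq (thetahat N w x) (theta0 x))%:E)
        + (c3 * dth%:R * (xi N ^+ 2 + 1) / N%:R)%:E)%E.
Proof.
move=> leb mp mq p0 q0 _ _ qp mtheta0 mthetahat bounded moment8 c0 m0 ratio_exp
  ratio2 [vs vs0 gauss].
set G := tail_envelope p q theta0 vs.
have G_fin := Ex_tail_envelope_fin_num mp mq mtheta0 p0 ratio2 moment8 gauss.
exists c, (2 * m / Num.sqrt vs), (2 * fine (Ex mu p (fun x => (G x)%:E))) => N N2.
split; first exact: Exw_change_density.
have -> : (2 * fine (Ex mu p (fun x => (G x)%:E)) * dth%:R * (xi N ^+ 2 + 1) / N%:R)%:E =
    ((2 * dth%:R * (xi N ^+ 2 + 1) / N%:R)%:E * Ex mu p (fun x => (G x)%:E))%E.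
  by rewrite -[in RHS](fineK G_fin) -EFinM; congr EFin; ring.
apply: (Exw_weighted_le _ _ (lebesgue_tuple_sigma_finite leb)
  (b := fun w x => xi N < sup_norm (thetahat N w x))) => //.
- exact: measurable_dist2_sq (measurableT_comp mtheta0 measurable_snd).
- exact: measurable_dens_ratio.
- exact: measurable_tail_envelope.
- apply: measurable_fun_ltr; first exact: measurable_cst.
  exact: measurable_sup_norm (mthetahat N).
- by move=> w x; exact: dist2_sq_ge0.
- by move=> x; rewrite divr_ge0.
- exact: tail_envelope_ge0.
- by rewrite mulr_ge0 ?expR_ge0 ?ltW.
- by rewrite !mulr_ge0 ?invr_ge0 ?addr_ge0 ?sqr_ge0.
- move=> w x; rewrite -leNgt => thetahat_le.
  apply: mul_dens_ratio_le; rewrite ?divr_ge0 ?dist2_sq_ge0 //; first exact: ltnW.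
  exact: dist2_sq_le.
- exact/bounded/ltnW.
Qed.
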